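(* Every pseudoforest $G$ with $\operatorname{cycles}(G)=\kappa(G)$ can be transformed into a unicyclic graph by a sequence of p-switches; that is, there are 2-switches $\tau_1,\dots,\tau_k$ ($k\ge0$) such that, with $G_0=G$ and $G_i=\tau_i(G_{i-1})$, each $\tau_i$ is a p-switch over $G_{i-1}$ and $G_k$ is unicyclic.
   Context: Graphs are finite, simple, undirected, labeled. A unicyclic graph is a connected graph with exactly one cycle; a pseudoforest is a graph each of whose components is a tree or a unicyclic graph. $\kappa(G)$ is the number of connected components and $\operatorname{cycles}(G)$ the number of subgraphs of $G$ isomorphic to a cycle. For vertices $a,b,c,d$, $A=\binom{a\ b}{c\ d}$ is interchangeable in $G$ if $ab,cd\in E(G)$, $\{a,b\}\cap\{c,d\}=\varnothing$, $ac,bd\notin E(G)$; the 2-switch $\tau_A$ sends $G$ to $G-ab-cd+ac+bd$ if $A$ is interchangeable and to $G$ otherwise (trivial). A nontrivial 2-switch $\tau$ over a pseudoforest $G$ is a p-switch if $\tau(G)$ is a pseudoforest. *)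

From mathcomp Require Import all_boot.
Set Implicit Arguments. Unset Strict Implicit. Unset Printing Implicit Defensive.

(* A finite simple labeled graph on the vertex type V is given by its edge set
   E : {set {set V}}, each edge being a 2-element subset of V. *)
Section Graphs.
Variable V : finType.
Implicit Types (E F C : {set {set V}}) (W U : {set V}).

Definition simple_graph E : bool := [forall e in E, #|e| == 2].

Definition adj F : rel V := fun x y => (x != y) && ([set x; y] \in F).

(* graph (W, F): vertex set W, edge set F (edges inside W) *)
Definition comp_of F W (x : V) : {set V} := [set y in W | connect (adj F) x y].

Definition kappa_on W F : nat := #|[set comp_of F W x | x in W]|.

Definition cycle_subgraph W F (UC : {set V} * {set {set V}}) : bool :=
  [&& UC.1 \subset W, UC.2 \subset F &
   [exists n : 'I_#|V|.+1, (3 <= n) &&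
     [exists f : {ffun 'I_n -> V}, [&& injectiveb f,
        UC.1 == [set f i | i : 'I_n] &
        UC.2 == [set [set f i; f (ordS i)] | i : 'I_n]]]]].

Definition cycles_on W F : nat := #|[set UC | cycle_subgraph W F UC]|.

Definition kappa E := kappa_on [set: V] E.
Definition cycles E := cycles_on [set: V] E.

Definition tree_on W F := (kappa_on W F == 1) && (cycles_on W F == 0).
Definition unicyclic_on W F := (kappa_on W F == 1) && (cycles_on W F == 1).

Definition unicyclic E := unicyclic_on [set: V] E.

Definition induced E W := [set e in E | e \subset W].

Definition pseudoforest E : bool :=
  [forall x, tree_on (comp_of E [set: V] x) (induced E (comp_of E [set: V] x))
          || unicyclic_on (comp_of E [set: V] x) (induced E (comp_of E [set: V] x))].

(* A = (a b / c d) is interchangeable in E *)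
Definition interchangeable E (A : V * V * V * V) : bool :=
  let: (a, b, c, d) := A in
  [&& [set a; b] \in E, [set c; d] \in E,
      [disjoint [set a; b] & [set c; d]],
      [set a; c] \notin E & [set b; d] \notin E].

Definition tau (A : V * V * V * V) E : {set {set V}} :=
  let: (a, b, c, d) := A in
  if interchangeable E A
  then ((E :\ [set a; b]) :\ [set c; d]) :|: [set [set a; c]; [set b; d]]
  else E.

Definition pswitch E A : bool :=
  [&& pseudoforest E, tau A E != E & pseudoforest (tau A E)].

Fixpoint pswitch_seq E (s : seq (V * V * V * V)) E' : Prop :=
  match s with
  | [::] => E' = E
  | A :: s' => pswitch E A /\ pswitch_seq (tau A E) s' E'
  end.

End Graphs.

(** For a graph (W, F) with kappa components, kappa + |F| >= |W|; the inequality
    is strict iff (W, F) contains a cycle, and there is exactly one cycle iff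
    kappa + |F| = |W| + 1. Hence a connected simple graph is unicyclic iff it has
    as many edges as vertices; call a simple graph balanced when every component
    has this property. A pseudoforest with as many cycles as components has a
    cycle in each component, so it is balanced.
    In a balanced graph with two or more components, pick edges ab and cd on the
    cycles of two different components. Neither is a bridge, so the 2-switch
    replacing them by ac and bd merges these two components into one connected
    graph that is still balanced, and leaves the other components untouched: it
    is a p-switch lowering kappa by one. Iterating ends in a unicyclic graph. *)

From mathcomp Require Import all_boot zify.
Set Implicit Arguments. Unset Strict Implicit. Unset Printing Implicit Defensive.

Lemma card_exchange2 (T : finType) (S : {set T}) (x1 x2 y1 y2 : T) :
  x1 \in S -> x2 \in S -> x1 != x2 -> y1 \notin S -> y2 \notin S -> y1 != y2 ->
  #|y1 |: (y2 |: (S :\ x1 :\ x2))| = #|S|.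
Proof.
move=> x1S x2S x12 y1S y2S y12.
rewrite (cardsD1 x1 S) x1S (cardsD1 x2 (S :\ x1)) !inE eq_sym x12 x2S.
by rewrite !cardsU1 !inE (negbTE y12) (negbTE y1S) (negbTE y2S) !andbF.
Qed.

Lemma card_imset_eq_kernel (T T1 T2 : finType) (f1 : T -> T1) (f2 : T -> T2)
    (A : {set T}) :
  {in A &, forall s t, (f1 s == f1 t) = (f2 s == f2 t)} -> #|f1 @: A| = #|f2 @: A|.
Proof.
move=> ker; case: (set_0Vmem A) => [->|[t0 t0A]]; first by rewrite !imset0 !cards0.
pose g (u : T2) := f1 (odflt t0 [pick t in A | f2 t == u]).
have gf2 : {in A, forall t, g (f2 t) = f1 t}.
  move=> t tA; rewrite /g /=; case: pickP => [s /andP[sA /eqP st]|/(_ t)] /=.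
    by apply/eqP; rewrite ker // st.
  by rewrite tA eqxx.
rewrite -(eq_in_imset gf2) imset_comp card_in_imset // => u1 u2.
case/imsetP=> [s sA ->] /imsetP[t tA ->].
by rewrite !gf2 // => /eqP; rewrite ker // => /eqP.
Qed.

Lemma setU1_ind (T : finType) (P : {set T} -> Prop) :
  P set0 -> (forall (A : {set T}) x, x \notin A -> P A -> P (x |: A)) -> forall A, P A.
Proof.
move=> P0 PU A; elim: {A}#|A| {-2}A (eqxx #|A|) => [|n IH] A.
  by rewrite cards_eq0 => /eqP->.
case: (set_0Vmem A) => [->|[x xA]]; first by rewrite cards0.
rewrite -(setD1K xA) cardsU1 !inE eqxx /= add1n eqSS => cA.
by apply: PU; [rewrite !inE eqxx | apply: IH].
Qed.

Lemma iter_ordS n (i : 'I_n) k : val (iter k (@ordS n) i) = (i + k) %% n.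
Proof.
elim: k => [|k IH] /=; first by rewrite addn0 modn_small.
by rewrite IH addnS -[((i + k) %% n).+1]addn1 modnDml addn1.
Qed.

Lemma iter_ordS_neq n (i : 'I_n) k : 0 < k < n -> iter k (@ordS n) i != i.
Proof.
case/andP=> k0 kn; apply/eqP => /(congr1 val); rewrite iter_ordS /=.
have ilt := ltn_ord i; have [small|large] := ltnP (i + k) n.
  by rewrite modn_small //; lia.
by rewrite -(subnK large) modnDr modn_small; lia.
Qed.

Lemma iter_ordS_id n (i : 'I_n) : iter n (@ordS n) i = i.
Proof. by apply: val_inj; rewrite iter_ordS modnDr modn_small. Qed.

Lemma ordS_neq n (i : 'I_n) : 1 < n -> ordS i != i.
Proof. by move=> n1; apply: (@iter_ordS_neq n i 1); rewrite n1. Qed.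

Section Pseudoforests.
Variable V : finType.
Implicit Types (E F : {set {set V}}) (W K : {set V}) (x y z w : V).

Local Notation conn F := (connect (adj F)).

(** * Connectivity *)

Lemma adj_sym F : symmetric (adj F).
Proof. by move=> x y; rewrite /adj eq_sym setUC. Qed.

Lemma conn_sym F : connect_sym (adj F).
Proof. exact: sym_connect_sym (@adj_sym F). Qed.

Lemma conn_mem_edge F x y : [set x; y] \in F -> conn F x y.
Proof.
have [->|xy] := eqVneq x y => [_|xyF]; first exact: connect0.
by apply: connect1; rewrite /adj xy.
Qed.

Lemma conn_subset F F' x y : F \subset F' -> conn F x y -> conn F' x y.
Proof.
move=> sFF'; apply: connect_sub => p q /andP[_ pqF].
by apply: conn_mem_edge; apply: (subsetP sFF').
Qed.

Lemma conn_neq F x y : ~~ conn F x y -> x != y.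
Proof. by apply: contraNneq => ->; apply: connect0. Qed.

Lemma set2_eq_cases x y p q : [set p; q] = [set x; y] ->
  (p = x /\ q = y) \/ (p = y /\ q = x).
Proof.
move/setP=> mem.
have hx : x \in [set p; q] by rewrite mem !inE eqxx.
have hy : y \in [set p; q] by rewrite mem !inE eqxx orbT.
have hp : p \in [set x; y] by rewrite -mem !inE eqxx.
have hq : q \in [set x; y] by rewrite -mem !inE eqxx orbT.
move: hp hq hx hy; rewrite !inE => /orP[]/eqP-> /orP[]/eqP->;
  rewrite ?eqxx ?orbb //=; try by [left|right].
- by move=> _ /eqP->; left.
- by move=> /eqP->; left.
Qed.

Lemma conn_setU1 F x y z w : conn ([set x; y] |: F) z w =
  [|| conn F z w, conn F z x && conn F y w | conn F z y && conn F x w].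
Proof.
set F' := [set x; y] |: F.
have sFF' : F \subset F' by apply: subsetUr.
have cxy : conn F' x y by apply: conn_mem_edge; rewrite setU11.
have cyx : conn F' y x by rewrite conn_sym.
apply/idP/idP; last first.
  case/or3P => [/(conn_subset sFF') //|/andP[zx yw]|/andP[zy xw]].
    exact: connect_trans (conn_subset sFF' zx) (connect_trans cxy (conn_subset sFF' yw)).
  exact: connect_trans (conn_subset sFF' zy) (connect_trans cyx (conn_subset sFF' xw)).
case/connectP => s; elim: s z => [|q s IH] z /=; first by move=> _ ->; rewrite connect0.
case/andP=> /andP[_]; rewrite in_setU1 => zqF' qs /(IH q qs) {IH qs}.
case/orP: zqF' => [/eqP/set2_eq_cases|zqF].
  by case=> -[-> ->]; case/or3P => [|/andP[_]|/andP[_]] ->; rewrite connect0 ?orbT.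
have czq : conn F z q by apply: conn_mem_edge.
case/or3P => [qw|/andP[qx yw]|/andP[qy xw]].
- by rewrite (connect_trans czq qw).
- by rewrite (connect_trans czq qx) yw orbT.
- by rewrite (connect_trans czq qy) xw !orbT.
Qed.

Lemma conn_setU1_conn F x y : conn F x y -> conn ([set x; y] |: F) =2 conn F.
Proof.
move=> cxy z w; rewrite conn_setU1; apply/or3P/idP => [|zw]; last by constructor.
case=> [//|/andP[zx yw]|/andP[zy xw]].
  by rewrite (connect_trans zx (connect_trans cxy yw)).
by rewrite conn_sym in cxy; rewrite (connect_trans zy (connect_trans cxy xw)).
Qed.



Lemma comp_of_eq F W x y : x \in W -> y \in W ->
  (comp_of F W x == comp_of F W y) = conn F x y.
Proof.
move=> xW yW; apply/eqP/idP => [cxcy|cxy].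
  have : y \in comp_of F W y by rewrite inE yW connect0.
  by rewrite -cxcy inE => /andP[].
apply/setP => z; rewrite !inE; case: (z \in W) => //=.
apply/idP/idP; last exact: connect_trans.
by apply: connect_trans; rewrite conn_sym.
Qed.

Lemma eq_kappa_on W F F' : conn F =2 conn F' -> kappa_on W F = kappa_on W F'.
Proof.
move=> eqFF'; rewrite /kappa_on (@eq_imset _ _ (comp_of F W) (comp_of F' W)) // => x.
by apply/setP => z; rewrite !inE eqFF'.
Qed.

Lemma kappa_on_setU1_disconnected W F x y : x \in W -> y \in W -> ~~ conn F x y ->
  (kappa_on W ([set x; y] |: F)).+1 = kappa_on W F.
Proof.
move=> xW yW nxy; set F' := [set x; y] |: F; rewrite /kappa_on.
set W0 := [set z in W | ~~ conn F x z].
have sW0 : W0 \subset W by apply/subsetP => z; rewrite inE => /andP[].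
have yW0 : y \in W0 by rewrite inE yW.
have compF' : comp_of F' W @: W = comp_of F' W @: W0.
  apply/eqP; rewrite eqEsubset (imsetS _ sW0) andbT.
  apply/subsetP => _ /imsetP[z zW ->].
  have [xz|nxz] := boolP (conn F x z); last by rewrite imset_f // inE zW.
  apply/imsetP; exists y => //; apply/eqP; rewrite comp_of_eq //.
  by rewrite conn_setU1 connect0 (conn_sym F z x) xz !orbT.
have compF : comp_of F W @: W = comp_of F W x |: comp_of F W @: W0.
  apply/eqP; rewrite eqEsubset subUset sub1set imset_f // (imsetS _ sW0) !andbT.
  apply/subsetP => _ /imsetP[z zW ->]; rewrite in_setU1.
  have [xz|nxz] := boolP (conn F x z); first by rewrite eq_sym comp_of_eq ?xz.
  by rewrite imset_f ?orbT // inE zW.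
have notin : comp_of F W x \notin comp_of F W @: W0.
  apply/imsetP=> -[z]; rewrite inE => /andP[zW nxz] /eqP.
  by rewrite comp_of_eq ?(negbTE nxz).
rewrite compF' compF cardsU1 notin add1n; congr _.+1.
apply: card_imset_eq_kernel => z t; rewrite !inE => /andP[zW nxz] /andP[tW nxt].
rewrite !comp_of_eq // conn_setU1 (conn_sym F z x).
by rewrite (negbTE nxz) (negbTE nxt) /= !andbF !orbF.
Qed.

Lemma leq_kappa_on_setU1 W F x y : x \in W -> y \in W ->
  kappa_on W F <= (kappa_on W ([set x; y] |: F)).+1.
Proof.
move=> xW yW; have [cxy|nxy] := boolP (conn F x y).
  by rewrite (eq_kappa_on W (conn_setU1_conn cxy)).
by rewrite (kappa_on_setU1_disconnected xW yW nxy).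
Qed.

Lemma kappa_on_set0 W : kappa_on W set0 = #|W|.
Proof.
rewrite /kappa_on -[in RHS](imset_id W); apply: card_imset_eq_kernel => z t zW tW.
rewrite comp_of_eq //; apply/idP/eqP => [|->]; last exact: connect0.
by case/connectP => -[|q s] //= /andP[/andP[_]]; rewrite inE.
Qed.




(** * Cycle subgraphs *)

Lemma cycle_subgraphP W F C : cycle_subgraph W F C -> exists n (f : 'I_n -> V),
  [/\ 2 < n, injective f, C.1 = [set f i | i : 'I_n] &
      C.2 = [set [set f i; f (ordS i)] | i : 'I_n]].
Proof.
case/and3P=> _ _ /existsP[n /andP[n3 /existsP[f]]].
by case/and3P=> /injectiveP f_inj /eqP C1 /eqP C2; exists n, f.
Qed.

Lemma cycle_subgraph_build W F n (f : 'I_n -> V) : 2 < n -> injective f ->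
  [set f i | i : 'I_n] \subset W -> [set [set f i; f (ordS i)] | i : 'I_n] \subset F ->
  cycle_subgraph W F ([set f i | i : 'I_n], [set [set f i; f (ordS i)] | i : 'I_n]).
Proof.
move=> n3 f_inj sW sF; rewrite /cycle_subgraph /= sW sF /=.
have n_small : n < #|V|.+1 by rewrite ltnS -[n]card_ord (leq_card _ f_inj).
apply/existsP; exists (Ordinal n_small); rewrite /= n3 /=.
apply/existsP; exists (finfun f); apply/and3P; split.
- by apply/injectiveP => i j; rewrite !ffunE => /f_inj.
- by apply/eqP; apply: eq_imset => i; rewrite ffunE.
- by apply/eqP; apply: eq_imset => i; rewrite !ffunE.
Qed.

Lemma cycle_subgraph_within W F W' F' C : cycle_subgraph W F C ->
  C.1 \subset W' -> C.2 \subset F' -> cycle_subgraph W' F' C.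
Proof. by case/and3P=> _ _ C_cycle sW' sF'; rewrite /cycle_subgraph sW' sF'. Qed.

Lemma cycle_subgraph_sub W F C : cycle_subgraph W F C -> C.1 \subset W /\ C.2 \subset F.
Proof. by case/and3P. Qed.

Lemma mem_cycle_edge W F C e : cycle_subgraph W F C -> e \in C.2 -> e \in F.
Proof. by case/cycle_subgraph_sub=> _ /subsetP; apply. Qed.

Lemma cycle_has_edge W F C : cycle_subgraph W F C ->
  exists a b, [/\ a != b, a \in C.1 & [set a; b] \in C.2].
Proof.
case/cycle_subgraphP=> n [f [n3 f_inj -> ->]].
have i : 'I_n by exists 0; lia.
exists (f i), (f (ordS i)); split; last by apply/imsetP; exists i.
- by rewrite (inj_eq f_inj) eq_sym ordS_neq ?(ltnW n3).
- exact: imset_f.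
Qed.

Lemma cycle_vertexE W F C z : cycle_subgraph W F C ->
  (z \in C.1) = [exists e in C.2, z \in e].
Proof.
case/cycle_subgraphP=> n [f [_ _ -> ->]] /=; apply/imsetP/existsP.
  case=> i _ ->; exists [set f i; f (ordS i)].
  by rewrite !inE eqxx andbT; apply/imsetP; exists i.
by case=> _ /andP[/imsetP[i _ ->]]; rewrite !inE => /orP[]/eqP->; eexists.
Qed.

Lemma mem_cycle_vertex W F C x y : cycle_subgraph W F C -> [set x; y] \in C.2 ->
  x \in C.1.
Proof.
move=> C_cycle xyC; rewrite (cycle_vertexE _ C_cycle).
by apply/existsP; exists [set x; y]; rewrite xyC !inE eqxx.
Qed.

Lemma cycle_edge_inj n (f : 'I_n -> V) : 2 < n -> injective f ->
  injective (fun i => [set f i; f (ordS i)]).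
Proof.
move=> n3 f_inj i j eij.
have : f i \in [set f j; f (ordS j)] by rewrite -eij !inE eqxx.
have : f (ordS i) \in [set f j; f (ordS j)] by rewrite -eij !inE eqxx orbT.
rewrite !inE !(inj_eq f_inj) => /orP[/eqP Sij|/eqP/ordS_inj //] /orP[/eqP ij|/eqP iSj].
  by move: (ordS_neq i (ltnW n3)); rewrite Sij ij eqxx.
have : iter 2 (@ordS n) j != j by rewrite iter_ordS_neq // n3.
by rewrite /= -iSj Sij eqxx.
Qed.

Lemma cycle_conn W F C z t : cycle_subgraph W F C -> z \in C.1 -> t \in C.1 ->
  conn F z t.
Proof.
move=> C_cycle; have [n [f [n3 f_inj -> C2]]] := cycle_subgraphP C_cycle.
have n0 : 0 < n by apply: leq_trans n3.
have conn_iter k i : conn F (f i) (f (iter k (@ordS n) i)).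
  elim: k => [|k IH] /=; first exact: connect0.
  apply: connect_trans IH (conn_mem_edge _); apply: mem_cycle_edge C_cycle _.
  by rewrite C2; apply/imsetP; exists (iter k (@ordS n) i).
have conn0j (j : 'I_n) : conn F (f (Ordinal n0)) (f j).
  suff -> : j = iter j (@ordS n) (Ordinal n0) by apply: conn_iter.
  by apply: val_inj; rewrite iter_ordS /= add0n modn_small.
case/imsetP=> [i _ ->] /imsetP[j _ ->].
by apply: connect_trans (conn0j j); rewrite conn_sym.
Qed.

Lemma conn_setD1_cycle_edge W F C e : cycle_subgraph W F C -> e \in C.2 ->
  conn (F :\ e) =2 conn F.
Proof.
move=> C_cycle eC; have eF := mem_cycle_edge C_cycle eC.
have [n [f [n3 f_inj _ C2]]] := cycle_subgraphP C_cycle.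
move: eC; rewrite C2 => /imsetP[i _ ee].
pose j k := iter k.+1 (@ordS n) i.
have conn_j k : k < n -> conn (F :\ e) (f (ordS i)) (f (j k)).
  elim: k => [|k IH] kn; first exact: connect0.
  apply: connect_trans (IH (ltnW kn)) (conn_mem_edge _).
  rewrite !inE ee (inj_eq (cycle_edge_inj n3 f_inj)) (@iter_ordS_neq n i k.+1 kn).
  by apply: mem_cycle_edge C_cycle _; rewrite C2; apply/imsetP; exists (j k).
have conn_i : conn (F :\ e) (f i) (f (ordS i)).
  have n0 : 0 < n by apply: leq_trans n3.
  have jn : j n.-1 = i by rewrite /j prednK ?iter_ordS_id.
  by rewrite conn_sym -{2}jn; apply: conn_j; rewrite prednK.
rewrite -{2}(setD1K eF) ee => z w.
by rewrite conn_setU1_conn -?ee.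
Qed.

(** * Counting edges, components and cycles *)

Definition graph_on W F := forall e, e \in F ->
  exists x y, [/\ x != y, e = [set x; y], x \in W & y \in W].

Lemma graph_on_sub W F F' : F' \subset F -> graph_on W F -> graph_on W F'.
Proof. by move=> sF'F gF e /(subsetP sF'F) /gF. Qed.

Lemma leq_card_kappa_on W F : graph_on W F -> #|W| <= kappa_on W F + #|F|.
Proof.
elim/setU1_ind: F => [|F e eF IH] gF; first by rewrite kappa_on_set0 cards0 addn0.
have [x [y [_ ee xW yW]]] := gF e (setU11 _ _).
have := IH (graph_on_sub (subsetUr _ _) gF); have := leq_kappa_on_setU1 F xW yW.
rewrite cardsU1 eF -ee /=; move: (kappa_on W F) (kappa_on W (e |: F)) => k k'; lia.
Qed.

Lemma path_within W F x s : graph_on W F -> x \in W -> path (adj F) x s ->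
  {subset s <= W}.
Proof.
move=> gF; elim: s x => [|q s IH] x xW //= /andP[/andP[_ /gF[a [b [_ e aW bW]]]] qs].
have qW : q \in W.
  have : q \in [set x; q] by rewrite !inE eqxx orbT.
  by rewrite e !inE => /orP[]/eqP->.
by move=> z; rewrite inE => /orP[/eqP->|/(IH q qW qs)].
Qed.

Lemma cycle_setU1_conn W F x y : graph_on W F -> x \in W -> x != y ->
  [set x; y] \notin F -> conn F x y -> exists C, cycle_subgraph W ([set x; y] |: F) C.
Proof.
move=> gF xW xy xyF /connectP[p0 p0_path].
case: (shortenP p0_path) => p p_path p_uniq _ y_last {p0 p0_path}.
have p2 : 1 < size p.
  case: p p_path p_uniq y_last => [|q [|? ?]] //=.
    by move=> _ _ e; rewrite e eqxx in xy.
  by move=> /andP[/andP[_ e] _] _ ey; rewrite ey e in xyF.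
set s := x :: p; set n := size s.
pose f (i : 'I_n) := nth x s i.
have f_inj : injective f by move=> i j /eqP; rewrite /f nth_uniq // => /eqP/val_inj.
exists ([set f i | i : 'I_n], [set [set f i; f (ordS i)] | i : 'I_n]).
apply: cycle_subgraph_build => //.
  apply/subsetP => _ /imsetP[i _ ->]; rewrite /f.
  have := mem_nth x (ltn_ord i); rewrite inE => /orP[/eqP->//|].
  exact: (path_within gF xW p_path).
apply/subsetP => _ /imsetP[i _ ->]; rewrite /f /=.
have [i_lt|i_last] := ltnP i.+1 n.
  rewrite modn_small // in_setU1; apply/orP; right.
  by case/andP: (pathP x p_path i i_lt).
have -> : i.+1 = n by apply/eqP; rewrite eqn_leq i_last ltn_ord.
have -> : (i : nat) = size p.
  by apply/eqP; rewrite -eqSS -/(size s) eqn_leq i_last ltn_ord.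
by rewrite modnn /= y_last -[size p]/((size s).-1) nth_last /= setUC setU11.
Qed.

Lemma cycle_exists W F : graph_on W F -> #|W| < kappa_on W F + #|F| ->
  exists C, cycle_subgraph W F C.
Proof.
elim/setU1_ind: F => [|F e eF IH] gF; first by rewrite kappa_on_set0 cards0 addn0 ltnn.
have gF' := graph_on_sub (subsetUr _ _) gF.
have [x [y [xy ee xW yW]]] := gF e (setU11 _ _).
rewrite cardsU1 eF add1n => W_lt.
have [lt|ge] := ltnP #|W| (kappa_on W F + #|F|).
  have [C C_cycle] := IH gF' lt; have [sCW sCF] := cycle_subgraph_sub C_cycle.
  by exists C; apply: cycle_subgraph_within C_cycle sCW (subset_trans sCF (subsetUr _ _)).
have [cxy|nxy] := boolP (conn F x y).
  by rewrite ee; apply: cycle_setU1_conn; rewrite -?ee.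
have := kappa_on_setU1_disconnected xW yW nxy; rewrite -ee => kappa_eq.
by move: W_lt ge; rewrite -kappa_eq; move: (kappa_on _ _) => k; lia.
Qed.

Lemma kappa_on_card_setD1_cycle_edge W F C e : cycle_subgraph W F C -> e \in C.2 ->
  (kappa_on W (F :\ e) + #|F :\ e|).+1 = kappa_on W F + #|F|.
Proof.
move=> C_cycle eC; rewrite (eq_kappa_on W (conn_setD1_cycle_edge C_cycle eC)).
by rewrite [#|F|](cardsD1 e) (mem_cycle_edge C_cycle eC) addnCA add1n.
Qed.

Lemma ltn_card_kappa_on W F C : graph_on W F -> cycle_subgraph W F C ->
  #|W| < kappa_on W F + #|F|.
Proof.
move=> gF C_cycle; have [a [b [_ _ abC]]] := cycle_has_edge C_cycle.
rewrite -(kappa_on_card_setD1_cycle_edge C_cycle abC) ltnS.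
exact: leq_card_kappa_on (graph_on_sub (subsetDl _ _) gF).
Qed.

Lemma cycles_on_le1 W F : graph_on W F -> kappa_on W F + #|F| <= #|W|.+1 ->
  cycles_on W F <= 1.
Proof.
move=> gF F_small.
have edges_sub C D : cycle_subgraph W F C -> cycle_subgraph W F D -> C.2 \subset D.2.
  move=> C_cycle D_cycle; apply/subsetP => e eC; apply/contraT => eD.
  have [sDW sDF] := cycle_subgraph_sub D_cycle.
  have D_cycle' : cycle_subgraph W (F :\ e) D.
    apply: cycle_subgraph_within D_cycle sDW _; apply/subsetP => e' e'D.
    by rewrite !inE (subsetP sDF _ e'D) andbT; apply: contraNneq eD => <-.
  move: F_small; rewrite -(kappa_on_card_setD1_cycle_edge C_cycle eC) ltnS leqNgt.
  by rewrite (ltn_card_kappa_on (graph_on_sub (subsetDl _ _) gF) D_cycle').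
apply/card_le1_eqP => C D; rewrite !inE => C_cycle D_cycle.
have C2D2 : C.2 = D.2 by apply/eqP; rewrite eqEsubset !edges_sub.
have C1D1 : C.1 = D.1.
  by apply/setP => z; rewrite (cycle_vertexE _ C_cycle) (cycle_vertexE _ D_cycle) C2D2.
by move: C1D1 C2D2; case: C D {C_cycle D_cycle} => [? ?] [? ?] /= -> ->.
Qed.

Lemma cycles_on_gt1 W F : graph_on W F -> #|W|.+1 < kappa_on W F + #|F| ->
  1 < cycles_on W F.
Proof.
move=> gF F_large; have [C C_cycle] := cycle_exists gF (ltnW F_large).
have [a [b [_ _ abC]]] := cycle_has_edge C_cycle.
have [D D_cycle] : exists D, cycle_subgraph W (F :\ [set a; b]) D.
  apply: cycle_exists; first exact: graph_on_sub (subsetDl _ _) gF.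
  by rewrite -ltnS (kappa_on_card_setD1_cycle_edge C_cycle abC).
have [sDW sDF] := cycle_subgraph_sub D_cycle.
apply/card_gt1P; exists C, D; rewrite !inE C_cycle.
rewrite (cycle_subgraph_within D_cycle sDW (subset_trans sDF (subsetDl _ _))).
split=> //; apply: contraTneq abC => ->.
by apply/negP => /(subsetP sDF); rewrite !inE eqxx.
Qed.

Lemma cycles_on_eq1 W F : graph_on W F ->
  (cycles_on W F == 1) = (kappa_on W F + #|F| == #|W|.+1).
Proof.
move=> gF; case: (ltngtP (kappa_on W F + #|F|) #|W|.+1) => [F_small|F_large|F_eq].
- apply/negbTE; apply: contraTneq F_small => cycles1.
  have /card_gt0P[C] : 0 < cycles_on W F by rewrite cycles1.
  by rewrite inE ltnS -ltnNge => /(ltn_card_kappa_on gF).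
- by rewrite (gtn_eqF (cycles_on_gt1 gF F_large)).
- rewrite eqn_leq cycles_on_le1 ?F_eq //=.
  have [C C_cycle] : exists C, cycle_subgraph W F C by apply: cycle_exists; rewrite ?F_eq.
  by apply/card_gt0P; exists C; rewrite inE.
Qed.

(** * Balanced graphs *)

Local Notation comp E := (comp_of E [set: V]).

Lemma mem_comp E x y : (y \in comp E x) = conn E x y.
Proof. by rewrite inE in_setT. Qed.

Lemma conn_induced E K x y : {in K, forall u v, adj E u v -> v \in K} -> x \in K ->
  conn E x y -> conn (induced E K) x y.
Proof.
move=> K_closed xK /connectP[p p_path ->] {y}.
elim: p x xK p_path => [|q p IH] x xK /=; first by rewrite connect0.
case/andP=> xq qp; have qK := K_closed x xK q xq.
apply: connect_trans (IH q qK qp); case/andP: xq => xq xqE.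
by apply: conn_mem_edge; rewrite inE xqE subUset !sub1set xK qK.
Qed.

Lemma kappa_on_comp E x : kappa_on (comp E x) (induced E (comp E x)) = 1.
Proof.
set K := comp E x.
have K_closed : {in K, forall u v, adj E u v -> v \in K}.
  move=> u; rewrite /K mem_comp => xu v /connect1.
  by rewrite mem_comp; apply: connect_trans.
have compK : {in K, comp_of (induced E K) K =1 fun=> K}.
  move=> z zK; apply/setP => w; rewrite inE andb_idr // => wK.
  apply: (conn_induced K_closed zK).
  by move: zK wK; rewrite /K !mem_comp conn_sym; apply: connect_trans.
rewrite /kappa_on (eq_in_imset compK).
suff -> : [set K | _ in K] = [set K] by rewrite cards1.
apply/setP => Y; rewrite inE; apply/imsetP/eqP => [[z _ ->] //|->].
by exists x; rewrite // mem_comp connect0.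
Qed.

Lemma graph_on_induced E K : simple_graph E -> graph_on K (induced E K).
Proof.
move=> /forallP sE e; rewrite inE => /andP[eE eK].
have /cards2P[x [y [xy exy]]] : #|e| == 2 by have := sE e; rewrite eE.
by exists x, y; move: eK; rewrite exy subUset !sub1set => /andP[].
Qed.

Lemma cycle_in_comp E C z : cycle_subgraph [set: V] E C -> z \in C.1 ->
  cycle_subgraph (comp E z) (induced E (comp E z)) C.
Proof.
move=> C_cycle zC; apply: (cycle_subgraph_within C_cycle).
  by apply/subsetP => t tC; rewrite mem_comp (cycle_conn C_cycle zC tC).
apply/subsetP => e eC; rewrite inE (mem_cycle_edge C_cycle eC).
apply/subsetP => t te; rewrite mem_comp (cycle_conn C_cycle zC) //.
by rewrite (cycle_vertexE _ C_cycle); apply/existsP; exists e; rewrite eC.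
Qed.

Definition balanced E :=
  simple_graph E /\ forall x, #|induced E (comp E x)| = #|comp E x|.

Lemma unicyclic_compE E x : simple_graph E ->
  unicyclic_on (comp E x) (induced E (comp E x)) =
  (#|induced E (comp E x)| == #|comp E x|).
Proof.
move=> sE; rewrite /unicyclic_on (cycles_on_eq1 (graph_on_induced sE)).
by rewrite kappa_on_comp add1n eqSS.
Qed.

Lemma balanced_pseudoforest E : balanced E -> pseudoforest E.
Proof.
by case=> sE balE; apply/forallP => x; rewrite unicyclic_compE // balE eqxx orbT.
Qed.

Lemma balanced_unicyclic E : balanced E -> kappa E <= 1 -> 0 < #|V| -> unicyclic E.
Proof.
move=> [sE balE] kappa1 /card_gt0P[x _].
have compT : comp E x = [set: V].
  apply/setP => y; rewrite in_setT; move/card_le1_eqP: kappa1.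
  by move=> /(_ (comp E y) (comp E x)) -> //; rewrite ?imset_f // mem_comp connect0.
have inducedT : induced E [set: V] = E by apply/setP => e; rewrite inE subsetT andbT.
by have := unicyclic_compE x sE; rewrite balE eqxx compT inducedT.
Qed.

Lemma pseudoforest_comp_cycles_le1 E x : pseudoforest E ->
  cycles_on (comp E x) (induced E (comp E x)) <= 1.
Proof. by move/forallP/(_ x) => /orP[] /andP[_ /eqP->]. Qed.

Lemma comp_cycles_eq1 E x : pseudoforest E -> cycles E = kappa E ->
  cycles_on (comp E x) (induced E (comp E x)) = 1.
Proof.
move=> pfE cyclesE; apply/eqP; rewrite eqn_leq pseudoforest_comp_cycles_le1 //= lt0n.
apply/negP => /eqP/cards0_eq no_cycle.
(* Sending each cycle to its component is injective and misses [comp E x]. *)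
set Cy := [set C | cycle_subgraph [set: V] E C].
pose root (C : {set V} * {set {set V}}) := odflt x [pick z in C.1].
have root_cycle C : C \in Cy ->
    cycle_subgraph (comp E (root C)) (induced E (comp E (root C))) C.
  rewrite inE => C_cycle; have [a [_ [_ aC _]]] := cycle_has_edge C_cycle.
  by rewrite /root; case: pickP => [z zC|/(_ a)/negP//] /=; apply: cycle_in_comp.
have root_inj : {in Cy &, injective (fun C => comp E (root C))}.
  move=> C D CCy DCy /= rootCD.
  have D_cycle := root_cycle D DCy; rewrite -rootCD in D_cycle.
  move/card_le1_eqP/(_ D C): (pseudoforest_comp_cycles_le1 (root C) pfE).
  by rewrite !inE; apply; last exact: root_cycle.
have root_sub :
    [set comp E (root C) | C in Cy] \subset [set comp E z | z in [set: V]] :\ comp E x.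
  apply/subsetP => _ /imsetP[C CCy ->]; rewrite !inE andbC.
  apply/andP; split; first by apply/imsetP; exists (root C).
  apply/eqP => rootC; have := root_cycle C CCy; rewrite rootC => Cx.
  by have := in_set0 C; rewrite -no_cycle inE Cx.
have comp_x : comp E x \in [set comp E z | z in [set: V]] by apply/imsetP; exists x.
have cycles_kappa : #|Cy| = #|[set comp E z | z in [set: V]]| := cyclesE.
have := subset_leq_card root_sub; rewrite card_in_imset // cycles_kappa.
have := cardsD1 (comp E x) [set comp E z | z in [set: V]]; rewrite comp_x.
by move: #|_ :\ _| #|[set comp E z | z in _]| => m k; lia.
Qed.

Lemma pseudoforest_balanced E :
  simple_graph E -> pseudoforest E -> cycles E = kappa E -> balanced E.
Proof.
move=> sE pfE cyclesE; split=> // x; apply/eqP.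
by rewrite -unicyclic_compE // /unicyclic_on kappa_on_comp comp_cycles_eq1.
Qed.

(** * Switching two unicyclic components *)

Lemma simple_edge_neq E x y : simple_graph E -> [set x; y] \in E -> x != y.
Proof.
by move/forallP/(_ [set x; y]) => /implyP sE /sE; rewrite cards2; case: (x != y).
Qed.

Lemma comp_disjoint E x y : ~~ conn E x y -> [disjoint comp E x & comp E y].
Proof.
move=> nxy; rewrite -setI_eq0; apply/eqP/setP => z; rewrite !inE /=.
by apply: contraNF nxy => /andP[xz yz]; rewrite (connect_trans xz) // conn_sym.
Qed.

Lemma induced_comp_setU E x y : simple_graph E ->
  induced E (comp E x :|: comp E y) = induced E (comp E x) :|: induced E (comp E y).
Proof.
move=> sE; apply/setP => e; rewrite !inE; have [eE|] := boolP (e \in E) => //=.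
have [p [q [_ epq]]] : exists p q, p != q /\ e = [set p; q].
  by apply/cards2P; move/forallP/(_ e): sE; rewrite eE.
rewrite epq in eE *; have pq := conn_mem_edge eE.
rewrite !subUset !sub1set !in_setU !mem_comp.
rewrite !(same_connect_r (conn_sym E) pq).
by case: (conn E x q); case: (conn E y q).
Qed.

Lemma induced_disjoint E (A B : {set V}) : simple_graph E -> [disjoint A & B] ->
  [disjoint induced E A & induced E B].
Proof.
move=> /forallP sE AB; rewrite -setI_eq0; apply/eqP/setP => e; rewrite !inE.
apply/negP => /and3P[/andP[eE eA] _ eB]; have /card_gt0P[z ze] : 0 < #|e|.
  by move/implyP/(_ eE)/eqP: (sE e) => ->.
by have := disjointFr AB (subsetP eA z ze); rewrite (subsetP eB z ze).
Qed.

Lemma disconnected_of_kappa_gt1 E : 1 < kappa E -> exists u v, ~~ conn E u v.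
Proof.
case/card_gt1P=> _ [_ [/imsetP[u _ ->] /imsetP[v _ ->] uv]].
by exists u, v; rewrite -(comp_of_eq _ (in_setT u) (in_setT v)).
Qed.

Lemma balanced_cycle_edge E x : balanced E ->
  exists a b C, [/\ conn E x a, cycle_subgraph [set: V] E C & [set a; b] \in C.2].
Proof.
case=> sE balE.
have [C C_cycle] : exists C, cycle_subgraph (comp E x) (induced E (comp E x)) C.
  by apply: cycle_exists (graph_on_induced sE) _; rewrite kappa_on_comp balE add1n.
have [a [b [_ aC abC]]] := cycle_has_edge C_cycle.
have [sCK sCE] := cycle_subgraph_sub C_cycle.
exists a, b, C; split=> //; first by rewrite -mem_comp (subsetP sCK).
apply: cycle_subgraph_within C_cycle (subsetT _) (subset_trans sCE _).
by apply/subsetP => e; rewrite inE => /andP[].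
Qed.

Section TwoComponentSwitch.
Variables (E : {set {set V}}) (a b c d : V) (Cab Ccd : {set V} * {set {set V}}).
Hypotheses (sE : simple_graph E) (nac : ~~ conn E a c).
Hypotheses (Cab_cycle : cycle_subgraph [set: V] E Cab) (ab_Cab : [set a; b] \in Cab.2).
Hypotheses (Ccd_cycle : cycle_subgraph [set: V] E Ccd) (cd_Ccd : [set c; d] \in Ccd.2).

Let abE : [set a; b] \in E := mem_cycle_edge Cab_cycle ab_Cab.
Let cdE : [set c; d] \in E := mem_cycle_edge Ccd_cycle cd_Ccd.
Let nbc : ~~ conn E b c.
Proof. by apply: contra nac; apply: connect_trans; apply: conn_mem_edge. Qed.
Let nad : ~~ conn E a d.
Proof. by rewrite -(same_connect_r (conn_sym E) (conn_mem_edge cdE)). Qed.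
Let nbd : ~~ conn E b d.
Proof. by rewrite -(same_connect_r (conn_sym E) (conn_mem_edge cdE)). Qed.
Let neq_ab : a != b := simple_edge_neq sE abE.
Let acE : [set a; c] \notin E := contra (@conn_mem_edge _ _ _) nac.
Let bdE : [set b; d] \notin E := contra (@conn_mem_edge _ _ _) nbd.

Local Notation E' := (tau (a, b, c, d) E).

Lemma switch_interchangeable : interchangeable E (a, b, c, d).
Proof.
rewrite /interchangeable abE cdE acE bdE andbT /=.
rewrite disjoints_subset subUset !sub1set !inE !negb_or.
by rewrite (conn_neq nac) (conn_neq nad) (conn_neq nbc) (conn_neq nbd).
Qed.

Lemma switchE : E' = [set b; d] |: ([set a; c] |: (E :\ [set a; b] :\ [set c; d])).
Proof.
rewrite /tau switch_interchangeable; apply/setP => e; rewrite !inE.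
by case: (e == [set b; d]); case: (e == [set a; c]); rewrite ?orbT ?orbF.
Qed.

Lemma conn_switch z w : conn E' z w =
  [|| conn E z w, conn E z a && conn E c w | conn E z c && conn E a w].
Proof.
have Ccd_cycle' : cycle_subgraph [set: V] (E :\ [set a; b]) Ccd.
  have [sCV sCE] := cycle_subgraph_sub Ccd_cycle.
  apply: (cycle_subgraph_within Ccd_cycle sCV); apply/subsetP => e eC.
  rewrite !inE (subsetP sCE _ eC) andbT; apply: contraTneq eC => -> {e}.
  apply: contra nac => abC.
  apply: (cycle_conn Ccd_cycle); first exact: mem_cycle_vertex Ccd_cycle abC.
  exact: mem_cycle_vertex Ccd_cycle cd_Ccd.
have conn_core : conn (E :\ [set a; b] :\ [set c; d]) =2 conn E.
  move=> p q; rewrite (conn_setD1_cycle_edge Ccd_cycle' cd_Ccd).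
  exact: (conn_setD1_cycle_edge Cab_cycle ab_Cab).
have conn_bd : conn ([set a; c] |: (E :\ [set a; b] :\ [set c; d])) b d.
  rewrite conn_setU1 !conn_core (conn_sym E b a).
  by rewrite (conn_mem_edge abE) (conn_mem_edge cdE) orbT.
by rewrite switchE (conn_setU1_conn conn_bd) conn_setU1 !conn_core.
Qed.

Lemma kappa_switch : (kappa E').+1 = kappa E.
Proof.
have : conn E' =2 conn ([set a; c] |: E) by move=> z w; rewrite conn_switch conn_setU1.
by rewrite /kappa => /(eq_kappa_on [set: V]) ->; apply: kappa_on_setU1_disconnected.
Qed.

Lemma switch_simple : simple_graph E'.
Proof.
apply/forallP => e; apply/implyP; rewrite switchE !inE.
case/orP=> [/eqP->|/orP[/eqP->|/andP[_ /andP[_ eE]]]].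
- by rewrite cards2 (conn_neq nbd).
- by rewrite cards2 (conn_neq nac).
- by move/forallP/(_ e): sE; rewrite eE.
Qed.

Lemma switch_nontrivial : E' != E.
Proof.
apply: contraTneq abE => <-; rewrite switchE !inE eqxx andbF orbF; apply/norP; split.
  apply/eqP => /setP/(_ a); rewrite !inE eqxx (negbTE neq_ab).
  by rewrite (negbTE (conn_neq nad)).
apply/eqP => /setP/(_ b); rewrite !inE eqxx orbT eq_sym (negbTE neq_ab).
by rewrite (negbTE (conn_neq nbc)).
Qed.

Lemma switch_away x : ~~ conn E' x a -> ~~ conn E x a /\ ~~ conn E x c.
Proof. by rewrite conn_switch connect0 !negb_or andbT => /and3P[-> _ ->]. Qed.

Lemma comp_switch_away x : ~~ conn E' x a -> comp E' x = comp E x.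
Proof.
case/switch_away=> nxa nxc; apply/setP => y.
by rewrite !mem_comp conn_switch (negbTE nxa) (negbTE nxc) !orbF.
Qed.

Lemma induced_switch_away x : ~~ conn E' x a ->
  induced E' (comp E x) = induced E (comp E x).
Proof.
case/switch_away=> nxa nxc; apply/setP => e; rewrite switchE !inE.
have [eK|] := boolP (e \subset comp E x); last by rewrite !andbF.
have edge_away p q : ~~ conn E x p -> e != [set p; q].
  move=> nxp; apply: contraTneq eK => ->.
  by rewrite subUset sub1set mem_comp (negbTE nxp).
have nxb : ~~ conn E x b by rewrite -(same_connect_r (conn_sym E) (conn_mem_edge abE)).
rewrite !andbT (negbTE (edge_away b d nxb)) (negbTE (edge_away a c nxa)).
by rewrite (edge_away c d nxc) (edge_away a b nxa).
Qed.

Lemma comp_switch_merged x : conn E' x a -> comp E' x = comp E a :|: comp E c.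
Proof.
move=> xa; apply/setP => y; rewrite in_setU !mem_comp.
rewrite (same_connect (conn_sym E') xa) conn_switch connect0 (negbTE nac).
by rewrite !orbF.
Qed.

Lemma card_induced_switch_merged : #|induced E' (comp E a :|: comp E c)| =
  #|induced E (comp E a)| + #|induced E (comp E c)|.
Proof.
set K := comp E a :|: comp E c.
have edgeK p q : conn E a p || conn E c p -> conn E a q || conn E c q ->
    [set p; q] \subset K.
  by rewrite subUset !sub1set !in_setU !mem_comp => -> ->.
have inducedE' : induced E' K =
    [set b; d] |: ([set a; c] |: (induced E K :\ [set a; b] :\ [set c; d])).
  apply/setP => e; rewrite switchE !inE.
  case: eqP => [->|_] /=.
    by rewrite edgeK ?(conn_mem_edge abE) ?(conn_mem_edge cdE) ?orbT.
  case: eqP => [->|_] /=; first by rewrite edgeK ?connect0 ?orbT.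
  by rewrite !andbA.
have abK : [set a; b] \in induced E K.
  by rewrite inE abE edgeK ?connect0 ?(conn_mem_edge abE).
have cdK : [set c; d] \in induced E K.
  by rewrite inE cdE edgeK ?connect0 ?(conn_mem_edge cdE) ?orbT.
rewrite inducedE' card_exchange2 //.
- rewrite induced_comp_setU //; apply/eqP.
  by rewrite (leq_card_setU _ _).2 induced_disjoint // comp_disjoint.
- apply/eqP => /setP/(_ a); rewrite !inE eqxx.
  by rewrite (negbTE (conn_neq nac)) (negbTE (conn_neq nad)).
- by rewrite inE negb_and bdE.
- by rewrite inE negb_and acE.
- apply/eqP => /setP/(_ b); rewrite !inE eqxx /= eq_sym (negbTE neq_ab).
  by rewrite (negbTE (conn_neq nbc)).
Qed.

Lemma switch_balanced : balanced E -> balanced E'.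
Proof.
case=> _ balE; split=> [|x]; first exact: switch_simple.
have [xa|nxa] := boolP (conn E' x a); last first.
  by rewrite comp_switch_away // induced_switch_away.
rewrite comp_switch_merged // card_induced_switch_merged !balE; apply/esym/eqP.
by rewrite (leq_card_setU _ _).2 comp_disjoint.
Qed.

Lemma two_component_switch : balanced E ->
  [/\ pswitch E (a, b, c, d), balanced E' & kappa E' < kappa E].
Proof.
move=> balE; have balE' := switch_balanced balE.
rewrite /pswitch !balanced_pseudoforest // switch_nontrivial -kappa_switch.
by split.
Qed.

End TwoComponentSwitch.

Lemma balanced_pswitch_step E : balanced E -> 1 < kappa E ->
  exists A, [/\ pswitch E A, balanced (tau A E) & kappa (tau A E) < kappa E].
Proof.
move=> balE kappa_gt1; have [sE _] := balE.
have [u [v nuv]] := disconnected_of_kappa_gt1 kappa_gt1.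
have [a [b [Cab [ua Cab_cycle ab_Cab]]]] := balanced_cycle_edge u balE.
have [c [d [Ccd [vc Ccd_cycle cd_Ccd]]]] := balanced_cycle_edge v balE.
have nac : ~~ conn E a c.
  apply: contra nuv => ac.
  by rewrite (connect_trans ua) // (connect_trans ac) // conn_sym.
exists (a, b, c, d).
exact: two_component_switch sE nac Cab_cycle ab_Cab Ccd_cycle cd_Ccd balE.
Qed.

Lemma balanced_pswitch_seq E : 0 < #|V| -> balanced E ->
  exists s E', pswitch_seq E s E' /\ unicyclic E'.
Proof.
move=> V_gt0; elim: {E}(kappa E).+1 {-2}E (ltnSn (kappa E)) => // n IH E kappaE balE.
have [kappa_le1|kappa_gt1] := leqP (kappa E) 1.
  by exists [::], E; split=> //; apply: balanced_unicyclic.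
have [A [pswA balA kappaA]] := balanced_pswitch_step balE kappa_gt1.
have [s [E' [seqE' uE']]] := IH (tau A E) (leq_trans kappaA kappaE) balA.
by exists (A :: s), E'.
Qed.

End Pseudoforests.

Unset Implicit Arguments.

Theorem lemma5p5 (V : finType) (E : {set {set V}}) :
  0 < #|V| -> simple_graph E -> pseudoforest E -> cycles E = kappa E ->
  exists (s : seq (V * V * V * V)) (E' : {set {set V}}),
    pswitch_seq E s E' /\ unicyclic E'.
Proof.
move=> V_gt0 sE pfE cyclesE.
exact: balanced_pswitch_seq V_gt0 (pseudoforest_balanced sE pfE cyclesE).
Qed.
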